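(* Let $K\ge 1$ and $T\ge 2$ be integers and let $a_1,\dots,a_{T-1}$ be binary sequences of period $K$. Define the binary sequences $s=I(0_K,a_1,\dots,a_{T-1})$ and $s'=I(1_K,a_1,\dots,a_{T-1})$ of period $KT$. For $0\le \tau<KT$ write $\tau=\tau_1T+\tau_2$ with $0\le\tau_2\le T-1$. Then $$R_{s'}(\tau)=\begin{cases}R_s(\tau)&\text{if }\tau_2=0,\\ R_s(\tau)+2d(a_{\tau_2})+2d(a_{T-\tau_2})&\text{if }\tau_2\neq 0,\end{cases}$$ $$R_{s,s'}(\tau)=\begin{cases}KT-2K&\text{if }\tau=0,\\ R_s(\tau)-2K&\text{if }\tau_2=0,\ \tau\neq 0,\\ R_s(\tau)+2d(a_{T-\tau_2})&\text{otherwise},\end{cases}\qquad R_{s',s}(\tau)=\begin{cases}KT-2K&\text{if }\tau=0,\\ R_s(\tau)-2K&\text{if }\tau_2=0,\ \tau\neq 0,\\ R_s(\tau)+2d(a_{\tau_2})&\text{otherwise}.\end{cases}$$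
   Context: A binary sequence of period $n$ is a map $\mathbb{Z}\to\{0,1\}$ with period $n$ (indices are taken modulo $n$). For binary sequences $a,b$ of period $n$, the periodic correlation is $R_{a,b}(\tau)=\sum_{t=0}^{n-1}(-1)^{a(t)+b(t+\tau)}$ (with $t+\tau$ taken mod $n$), and $R_a(\tau)=R_{a,a}(\tau)$ is the autocorrelation. For binary sequences $b_0,\dots,b_{T-1}$ of period $K$, the interleaved sequence $I(b_0,\dots,b_{T-1})$ is the binary sequence $v$ of period $KT$ defined by $v(iT+j)=b_j(i)$ for $0\le i\le K-1$, $0\le j\le T-1$ (i.e. the $j$-th column of the $K\times T$ array whose rows are consecutive blocks of $T$ terms of $v$ is $b_j$). $0_K$ and $1_K$ denote the all-zero and all-one sequences of period $K$. For a binary sequence $a$ of period $K$, its balance difference is $d(a)=2|\{0\le t\le K-1: a(t)=1\}|-K$. *)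

From mathcomp Require Import all_boot all_order all_algebra.
Set Implicit Arguments. Unset Strict Implicit. Unset Printing Implicit Defensive.
Import GRing.Theory Num.Theory.
Local Open Scope ring_scope.

(* A binary sequence of period n is represented by a function nat -> bool
   whose values are only read at indices 0..n-1 (indices reduced mod n). *)

Definition corr (n : nat) (a b : nat -> bool) (tau : nat) : int :=
  \sum_(t < n) (-1) ^+ (nat_of_bool (a t) + nat_of_bool (b ((t + tau) %% n)))%N.

Definition acorr (n : nat) (a : nat -> bool) (tau : nat) : int := corr n a a tau.

(* interleaved sequence I(b_0,...,b_{T-1}) of period K*T, column sequences of
   period K: v(i*T + j) = b_j(i); defined on all of nat by reduction mod K*T *)
Definition interleave (K T : nat) (b : nat -> nat -> bool) (m : nat) : bool :=
  b (m %% T)%N ((m %/ T) %% K)%N.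

Definition bal (K : nat) (a : nat -> bool) : int :=
  2 * (#|[set t : 'I_K | a t]|)%:Z - K%:Z.

(* column families for s = I(0_K, a_1, ..., a_{T-1}) and s' = I(1_K, a_1, ...) *)
Definition cols (c : bool) (a : nat -> nat -> bool) : nat -> nat -> bool :=
  fun j => if j == 0%N then (fun _ => c) else a j.

(* Switching the all-zero column of s to all-one flips the sign of s exactly at the
   positions t divisible by T, so in (-1)-notation s' = s - 2 [T | t].  Expanding the
   three correlations bilinearly leaves, besides R_s(tau), three correction sums over
   multiples t = iT of the period: the first reads off column tau mod T of s, the second
   (after rotating t by -tau) column -tau mod T, and the third counts the K multiples of
   T that stay multiples of T after a shift by tau.  A column of s sums to K (the zero
   column) or to -d(a_j). *)
From mathcomp Require Import all_boot all_order all_algebra.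
From mathcomp Require Import zify ring.
Import GRing.Theory Num.Theory.
Local Open Scope ring_scope.

Definition sgn (b : bool) : int := (-1) ^+ b.

Lemma corrE (n : nat) (f g : nat -> bool) (tau : nat) :
  (forall m, g (m %% n)%N = g m) ->
  corr n f g tau = \sum_(t < n) sgn (f t) * sgn (g (t + tau)%N).
Proof. by move=> gP; apply: eq_bigr => t _; rewrite gP exprD. Qed.

Lemma sum_sgn (K : nat) (f : nat -> bool) : \sum_(i < K) sgn (f i) = - bal K f.
Proof.
have card_f : (#|[set t : 'I_K | f t]| : int) = \sum_(i < K) (f i : nat)%:Z.
  rewrite -sum1_card big_mkcond -natz natr_sum.
  by apply: eq_bigr => i _; rewrite inE; case: (f i).
rewrite /bal card_f mulr_sumr.
transitivity (\sum_(i < K) (1 - 2 * (f i : nat)%:Z)).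
  by apply: eq_bigr => i _; rewrite /sgn; case: (f i).
by rewrite sumrB sumr_const card_ord -natz opprB.
Qed.

Lemma sum_ord_rot (N c : nat) (F : nat -> int) :
  \sum_(i < N) F ((i + c) %% N)%N = \sum_(i < N) F i.
Proof.
case: (posnP N) => [->|N_gt0]; first by rewrite !big_ord0.
pose h (i : 'I_N) := Ordinal (ltn_pmod (i + c) N_gt0).
have h_inj : injective h.
  move=> i j /(congr1 val) /eqP; rewrite /= eqn_modDr !modn_small // => /eqP.
  exact: val_inj.
by rewrite [RHS](reindex_inj h_inj).
Qed.

Lemma sum_ord_dvdn (K T : nat) (F : nat -> int) : (0 < T)%N ->
  \sum_(t < K * T) (T %| t)%N%:Z * F t = \sum_(i < K) F (i * T)%N.
Proof.
move=> T_gt0; rewrite -(big_mkord xpredT (fun t => (T %| t)%N%:Z * F t)) big_nat_mul big_mkord.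
apply: eq_bigr => i _.
rewrite mulSn addnC -[X in \big[_/_]_(X <= _ < _) _](add0n (i * T)%N) big_addn addKn.
rewrite big_ltn //= add0n dvdn_mull // mul1r big1_seq ?addr0 // => j /andP[_].
rewrite mem_index_iota => /andP[j_gt0 j_ltT].
by rewrite dvdn_addl ?dvdn_mull // gtnNdvd ?mul0r.
Qed.

Lemma modn_mulB (K T tau : nat) : (tau <= K * T)%N ->
  ((K * T - tau) %% T = (T - tau %% T) %% T)%N.
Proof.
move=> tau_le; have [r0|r_gt0] := posnP (tau %% T).
  by rewrite r0 subn0 modnn {1}(divn_eq tau T) r0 addn0 -mulnBl modnMl.
have T_gt0 : (0 < T)%N by case: T r_gt0 tau_le => //; rewrite modn0 muln0; lia.
have q_lt : (tau %/ T < K)%N.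
  rewrite ltn_divLR // ltn_neqAle tau_le andbT.
  by apply: contraTneq r_gt0 => ->; rewrite modnMl.
have q_le : ((tau %/ T).+1 * T <= K * T)%N by rewrite leq_mul2r q_lt orbT.
have -> : (K * T - tau = (K - (tau %/ T).+1) * T + (T - tau %% T))%N.
  rewrite mulnBl {1}(divn_eq tau T) mulSn; have := ltn_pmod tau T_gt0; lia.
by rewrite modnMDl.
Qed.

Lemma acorr0 (n : nat) (f : nat -> bool) : acorr n f 0 = n%:Z.
Proof.
rewrite /acorr /corr (eq_bigr (fun _ => 1)) => [|t _]; first by rewrite sumr_const card_ord -natz.
by rewrite addn0 modn_small //; case: (f t).
Qed.

Lemma bal_cols_false (K j : nat) (a : nat -> nat -> bool) :
  bal K (cols false a j) = if j == 0%N then - K%:Z else bal K (a j).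
Proof.
rewrite /cols; case: eqP => // _.
by rewrite /bal -/(set0 : {set _}) cards0 mulr0 sub0r.
Qed.

Section Interleave.

Variables (K T : nat).
Hypothesis T_gt0 : (0 < T)%N.

Lemma interleave_modn (b : nat -> nat -> bool) (m : nat) :
  interleave K T b (m %% (K * T)) = interleave K T b m.
Proof.
rewrite /interleave (modn_dvdm _ (dvdn_mull _ (dvdnn T))).
by rewrite divn_modl ?dvdn_mull // mulnK // modn_mod.
Qed.

Lemma interleaveMDl (b : nat -> nat -> bool) (i m : nat) :
  interleave K T b (i * T + m) = b (m %% T)%N ((i + m %/ T) %% K)%N.
Proof. by rewrite /interleave modnMDl divnMDl. Qed.

Lemma sgn_interleave_cols_true (a : nat -> nat -> bool) (m : nat) :
  sgn (interleave K T (cols true a) m) =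
  sgn (interleave K T (cols false a) m) - 2 * (T %| m)%N%:Z.
Proof. by rewrite /interleave /cols /dvdn; case: eqP => _; rewrite ?mulr0 ?subr0. Qed.

Lemma sum_dvdn_interleave (b : nat -> nat -> bool) (c : nat) :
  \sum_(t < K * T) (T %| t)%N%:Z * sgn (interleave K T b (t + c)) = - bal K (b (c %% T)%N).
Proof.
rewrite (sum_ord_dvdn K T (fun t => sgn (interleave K T b (t + c)))) // -sum_sgn.
rewrite -(sum_ord_rot _ (c %/ T) (fun i => sgn (b (c %% T)%N i))).
by apply: eq_bigr => i _; rewrite interleaveMDl addnC.
Qed.

Lemma sum_interleave_dvdn (b : nat -> nat -> bool) (c : nat) : (c <= K * T)%N ->
  \sum_(t < K * T) sgn (interleave K T b t) * (T %| t + c)%N%:Z =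
  - bal K (b ((K * T - c) %% T)%N).
Proof.
move=> c_le; rewrite -sum_dvdn_interleave.
rewrite -(sum_ord_rot _ (K * T - c) (fun t => sgn (interleave K T b t) * (T %| t + c)%N%:Z)).
apply: eq_bigr => t _; rewrite interleave_modn mulrC; congr (_%:Z * _).
rewrite /dvdn -modnDml (modn_dvdm _ (dvdn_mull K (dvdnn T))) modnDml.
by rewrite -addnA subnK // addnC modnMDl.
Qed.

Lemma sum_dvdn_dvdn (c : nat) :
  \sum_(t < K * T) (T %| t)%N%:Z * (T %| t + c)%N%:Z = K%:Z * (T %| c)%N%:Z.
Proof.
rewrite (sum_ord_dvdn K T (fun t => (T %| t + c)%N%:Z)) //.
rewrite (eq_bigr (fun _ => (T %| c)%N%:Z)) => [|i _].
  by rewrite sumr_const card_ord -mulr_natl natz.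
by rewrite dvdn_addr ?dvdn_mull.
Qed.

End Interleave.

Section FlippedColumn.

Variables (K T : nat) (a : nat -> nat -> bool) (tau : nat).
Hypotheses (T_gt0 : (0 < T)%N) (tau_le : (tau <= K * T)%N).

Local Notation s := (interleave K T (cols false a)).
Local Notation s' := (interleave K T (cols true a)).
Local Notation sgn_s t := (sgn (s t)).
Local Notation dvdT m := (T %| m)%N%:Z.

Lemma corr_cols_false_true :
  corr (K * T) s s' tau =
  acorr (K * T) s tau + 2 * bal K (cols false a ((K * T - tau) %% T)).
Proof.
rewrite /acorr !(corrE _ _ _ _ (interleave_modn K T T_gt0 _)).
rewrite (eq_bigr (fun t : 'I_(K * T) =>
    sgn_s t * sgn_s (t + tau)%N - 2 * (sgn_s t * dvdT (t + tau))));
  last by move=> t _; rewrite sgn_interleave_cols_true //; ring.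
by rewrite sumrB -mulr_sumr sum_interleave_dvdn //; ring.
Qed.

Lemma corr_cols_true_false :
  corr (K * T) s' s tau = acorr (K * T) s tau + 2 * bal K (cols false a (tau %% T)).
Proof.
rewrite /acorr !(corrE _ _ _ _ (interleave_modn K T T_gt0 _)).
rewrite (eq_bigr (fun t : 'I_(K * T) =>
    sgn_s t * sgn_s (t + tau)%N - 2 * (dvdT t * sgn_s (t + tau)%N)));
  last by move=> t _; rewrite sgn_interleave_cols_true //; ring.
by rewrite sumrB -mulr_sumr sum_dvdn_interleave //; ring.
Qed.

Lemma acorr_cols_true :
  acorr (K * T) s' tau =
  acorr (K * T) s tau + 2 * bal K (cols false a (tau %% T))
    + 2 * bal K (cols false a ((K * T - tau) %% T)) + 4 * K%:Z * dvdT tau.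
Proof.
rewrite /acorr !(corrE _ _ _ _ (interleave_modn K T T_gt0 _)).
rewrite (eq_bigr (fun t : 'I_(K * T) => sgn_s t * sgn_s (t + tau)%N
    - 2 * (dvdT t * sgn_s (t + tau)%N) - 2 * (sgn_s t * dvdT (t + tau))
    + 4 * (dvdT t * dvdT (t + tau))));
  last by move=> t _; rewrite !sgn_interleave_cols_true //; ring.
rewrite big_split !sumrB /= -!mulr_sumr.
by rewrite sum_dvdn_interleave // sum_interleave_dvdn // sum_dvdn_dvdn //; ring.
Qed.

End FlippedColumn.

Theorem theorem1 (K T : nat) (hK : (1 <= K)%N) (hT : (2 <= T)%N)
    (a : nat -> nat -> bool) (tau : nat) (htau : (tau < K * T)%N) :
  let s := interleave K T (cols false a) in
  let s' := interleave K T (cols true a) in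
  let tau2 := (tau %% T)%N in
  [/\ acorr (K * T) s' tau =
        (if tau2 == 0%N then acorr (K * T) s tau
         else acorr (K * T) s tau + 2 * bal K (a tau2) + 2 * bal K (a (T - tau2)%N)),
      corr (K * T) s s' tau =
        (if tau == 0%N then (K * T)%:Z - 2 * K%:Z
         else if tau2 == 0%N then acorr (K * T) s tau - 2 * K%:Z
         else acorr (K * T) s tau + 2 * bal K (a (T - tau2)%N)) &
      corr (K * T) s' s tau =
        (if tau == 0%N then (K * T)%:Z - 2 * K%:Z
         else if tau2 == 0%N then acorr (K * T) s tau - 2 * K%:Z
         else acorr (K * T) s tau + 2 * bal K (a tau2))].
Proof.
have T_gt0 : (0 < T)%N by apply: ltn_trans hT.
move=> s s' tau2; have tau_le := ltnW htau.
rewrite acorr_cols_true // corr_cols_false_true // corr_cols_true_false // -/s.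
rewrite modn_mulB // !bal_cols_false -/tau2.
have [tau2_0 | tau2_gt0] := posnP tau2.
  have T_dvd_tau : (T %| tau)%N by rewrite /dvdn -/tau2 tau2_0.
  rewrite tau2_0 subn0 modnn eqxx T_dvd_tau mulr1.
  by case: eqP => [->|_]; rewrite ?acorr0; split; ring.
have T_ndvd_tau : (T %| tau)%N = false by rewrite /dvdn -/tau2 gtn_eqF.
have tau_neq0 : (tau == 0)%N = false.
  by apply/eqP => tau0; move: tau2_gt0; rewrite /tau2 tau0 mod0n.
have T_tau2_gt0 : (0 < T - tau2)%N by rewrite subn_gt0 ltn_pmod.
have T_tau2_lt : (T - tau2 < T)%N by rewrite ltn_subrL tau2_gt0.
rewrite (modn_small T_tau2_lt) T_ndvd_tau mulr0 tau_neq0 !gtn_eqF //.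
by split; ring.
Qed.
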